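(* Let $\arctan$ be the principal branch of the inverse tangent with $\arctan0=0$. For $|z-1|<1$, \[ \frac{\arctan z-\frac{\pi}{4}}{z}=\sum_{n=1}^{\infty}(-1)^nT(n)(z-1)^n, \] where $T(n)=\sum_{k=1}^{n}\frac{(-1)^k}{2^{k/2}k}\sin\frac{3k\pi}{4}$ for $n\ge1$. *)

From Stdlib Require Import Reals.
From Coquelicot Require Import Coquelicot.
Open Scope R_scope.

(* Principal argument of a complex number w = (x, y), valued in (-PI, PI],
   with the convention Arg 0 = 0. *)
Definition Arg (w : C) : R :=
  let x := fst w in let y := snd w in
  if Rlt_dec 0 x then atan (y / x)
  else if Rlt_dec x 0 then
    (if Rle_dec 0 y then atan (y / x) + PI else atan (y / x) - PI)
  else
    if Rlt_dec 0 y then PI / 2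
    else if Rlt_dec y 0 then - (PI / 2) else 0.

Definition Clog (w : C) : C := (ln (Cmod w), Arg w).

(* Principal branch of the complex inverse tangent:
   arctan z = (i/2) (Log(1 - i z) - Log(1 + i z)),
   analytic off the cuts {i y : |y| >= 1}, with arctan 0 = 0. *)
Definition Carctan (z : C) : C :=
  Ci / 2 * (Clog (1 - Ci * z) - Clog (1 + Ci * z)).

Definition T (n : nat) : R :=
  sum_n_m (fun k : nat =>
    (-1) ^ k / (Rpower 2 (INR k / 2) * INR k) * sin (3 * INR k * PI / 4)) 1 n.

From Stdlib Require Import Reals Lra Lia.
From Coquelicot Require Import Coquelicot.
Open Scope R_scope.

(* Write z = 1 + w.  With q = (-1 + i)/2 one has 1 + (1 + u)^2 = 2 (1 - q u) (1 - conj q u) and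
   q - conj q = i, hence
     d/dt arctan (1 + t w) = w / (1 + (1 + t w)^2)
                           = w / (2 i) * (q / (1 - q t w) - conj q / (1 - conj q t w)).
   Expanding both fractions geometrically and integrating over t in [0, 1] gives
   arctan (1 + w) - pi/4 = sum_n b_n w^(n+1) with b_n = Im (q^(n+1)) / (n+1); the error after N
   terms is O(|q|^N) = O(2^(-N/2)), by the mean value theorem applied to the real and imaginary
   parts along the segment, where the principal arctan is given by real atan/ln formulas.
   Since Im (q^k) = sin (3 k pi/4) / 2^(k/2), the numbers a_n = (-1)^n T(n) satisfy
   a_(n+1) = b_n - a_n, so (1 + w) times the M-th partial sum of the claimed series equals the
   M-th partial sum of sum_n b_n w^(n+1) plus a_(M+1) w^(M+2), and |a_n| <= |q| / (1 - |q|). *)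

Lemma Re_sum_n (u : nat -> C) (N : nat) :
  Re (sum_n u N) = sum_n (fun n => Re (u n)) N.
Proof.
  induction N as [|N IH]; [now rewrite !sum_O|].
  now rewrite !sum_Sn, <- IH.
Qed.

Lemma Im_sum_n (u : nat -> C) (N : nat) :
  Im (sum_n u N) = sum_n (fun n => Im (u n)) N.
Proof.
  induction N as [|N IH]; [now rewrite !sum_O|].
  now rewrite !sum_Sn, <- IH.
Qed.

Lemma Re_Cdiv (x y : C) :
  Re (x / y) = (Re x * Re y + Im x * Im y) / (Re y ^ 2 + Im y ^ 2).
Proof. unfold Cdiv, Cinv, Cmult, Re, Im; simpl; unfold Rdiv; ring. Qed.

Lemma Im_Cdiv (x y : C) :
  Im (x / y) = (Im x * Re y - Re x * Im y) / (Re y ^ 2 + Im y ^ 2).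
Proof. unfold Cdiv, Cinv, Cmult, Re, Im; simpl; unfold Rdiv; ring. Qed.

Lemma RtoC_neq_0 (x : R) : x <> 0 -> RtoC x <> 0%C.
Proof. intros Hx H. apply Hx, RtoC_inj, H. Qed.

Lemma C2_neq_0 : RtoC 2 <> 0%C.
Proof. apply RtoC_neq_0. lra. Qed.

Lemma Rabs_Im_le_Cmod (z : C) : Rabs (Im z) <= Cmod z.
Proof. eapply Rle_trans; [apply Rmax_r | apply Rmax_Cmod]. Qed.

Lemma Cmod_le_Rabs_Re_Im (z : C) : Cmod z <= Rabs (Re z) + Rabs (Im z).
Proof.
  replace z with (RtoC (Re z) + Ci * RtoC (Im z))%C at 1
    by (destruct z; apply injective_projections; simpl; ring).
  eapply Rle_trans; [apply Cmod_triangle|].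
  rewrite Cmod_mult, Cmod_Ci, !Cmod_R. lra.
Qed.

Lemma Cmod_1_sub_ge (u : C) : 1 - Cmod u <= Cmod (1 - u).
Proof.
  pose proof (Cmod_triangle (1 - u) u) as H.
  replace (1 - u + u)%C with (RtoC 1) in H by ring.
  rewrite Cmod_1 in H. lra.
Qed.

Lemma Cmod_one_sub_mul_ge (p u : C) : Cmod u <= 1 -> 1 - Cmod p <= Cmod (1 - p * u).
Proof.
  intros Hu. eapply Rle_trans; [|apply Cmod_1_sub_ge].
  rewrite Cmod_mult. pose proof (Cmod_ge_0 p). nra.
Qed.

Lemma one_sub_mul_neq_0 (p u : C) : Cmod p < 1 -> Cmod u <= 1 -> (1 - p * u)%C <> 0%C.
Proof.
  intros Hp Hu H. pose proof (Cmod_one_sub_mul_ge p u Hu) as Hge.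
  rewrite H, Cmod_0 in Hge. lra.
Qed.

Lemma Cmod_RtoC_mul_le (t : R) (w : C) : 0 <= t <= 1 -> Cmod w <= 1 -> Cmod (t * w)%C <= 1.
Proof.
  intros Ht Hw. rewrite Cmod_mult, Cmod_R, Rabs_pos_eq by lra.
  pose proof (Cmod_ge_0 w). nra.
Qed.

Lemma pow_SS_le (x y : R) (N : nat) : 0 <= x <= y -> y <= 1 -> x ^ S (S N) <= y ^ N.
Proof.
  intros Hxy Hy. apply Rle_trans with (y ^ S (S N)); [apply pow_incr, Hxy|].
  rewrite <- (Rmult_1_l (y ^ N)). simpl. rewrite <- Rmult_assoc.
  apply Rmult_le_compat_r; [apply pow_le; lra | nra].
Qed.

Lemma sum_n_Cmult_sub (c : C) (x y : nat -> C) (N : nat) :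
  sum_n (fun n => c * (x n - y n))%C N = (c * (sum_n x N - sum_n y N))%C.
Proof.
  induction N as [|N IH]; [now rewrite !sum_O|].
  rewrite !sum_Sn, IH. change plus with Cplus. simpl. ring.
Qed.

Lemma sum_n_geom_mul (p u : C) (N : nat) : (1 - p * u)%C <> 0%C ->
  sum_n (fun n => p ^ S n * u ^ n)%C N = (p / (1 - p * u) - p * (p * u) ^ S N / (1 - p * u))%C.
Proof.
  intros Hpu. induction N as [|N IH].
  - rewrite sum_O. simpl. field. exact Hpu.
  - rewrite sum_Sn, IH. change plus with Cplus.
    rewrite !Cpow_S, !Cpow_mult_l. simpl. field. exact Hpu.
Qed.

Lemma Cmod_geom_tail_le (p u : C) (N : nat) : Cmod p < 1 -> Cmod u <= 1 ->
  Cmod (p * (p * u) ^ S N / (1 - p * u))%C <= Cmod p ^ S (S N) / (1 - Cmod p).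
Proof.
  intros Hp Hu.
  rewrite Cmod_div by (apply one_sub_mul_neq_0; assumption).
  rewrite Cmod_mult, Cmod_pow, Cmod_mult.
  assert (H0p := Cmod_ge_0 p). assert (H0u := Cmod_ge_0 u).
  assert (Hpow : (Cmod p * Cmod u) ^ S N <= Cmod p ^ S N)
    by (apply pow_incr; split; [apply Rmult_le_pos|]; nra).
  unfold Rdiv. change (Cmod p ^ S (S N)) with (Cmod p * Cmod p ^ S N).
  apply Rmult_le_compat.
  - apply Rmult_le_pos; [exact H0p | apply pow_le, Rmult_le_pos; assumption].
  - left. apply Rinv_0_lt_compat. pose proof (Cmod_one_sub_mul_ge p u Hu). lra.
  - apply Rmult_le_compat_l; assumption.
  - apply Rinv_le_contravar; [lra | apply Cmod_one_sub_mul_ge, Hu].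
Qed.

Lemma is_derive_pow_mul (n : nat) (c t : R) :
  is_derive (fun s => s ^ S n * c) t (INR (S n) * t ^ n * c).
Proof.
  auto_derive; [exact I|].
  change (match n with 0%nat => 1 | S _ => INR n + 1 end) with (INR (S n)). ring.
Qed.

Lemma is_derive_sum_pow (c : nat -> R) (N : nat) (t : R) :
  is_derive (fun s => sum_n (fun n => s ^ S n * c n) N) t
            (sum_n (fun n => INR (S n) * t ^ n * c n) N).
Proof.
  induction N as [|N IH].
  - apply (is_derive_ext (fun s => s ^ 1 * c 0%nat)); [intros s; now rewrite sum_O|].
    rewrite sum_O. apply is_derive_pow_mul.
  - apply (is_derive_ext (fun s => sum_n (fun n => s ^ S n * c n) N + s ^ S (S N) * c (S N)));
      [intros s; now rewrite sum_Sn|].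
    rewrite sum_Sn. apply (is_derive_plus (V := R_NormedModule)); [exact IH|].
    apply is_derive_pow_mul.
Qed.

Lemma is_derive_Re_sum_pow (c : nat -> C) (N : nat) (t : R) :
  is_derive (fun s => Re (sum_n (fun n => RtoC (s ^ S n) * c n)%C N)) t
            (Re (sum_n (fun n => RtoC (INR (S n) * t ^ n) * c n)%C N)).
Proof.
  apply (is_derive_ext (fun s => sum_n (fun n => s ^ S n * Re (c n)) N)).
  { intros s. rewrite Re_sum_n. apply sum_n_ext. intros n. unfold Re; simpl. ring. }
  rewrite Re_sum_n. erewrite sum_n_ext; [apply is_derive_sum_pow|].
  intros n. unfold Re; simpl. ring.
Qed.

Lemma is_derive_Im_sum_pow (c : nat -> C) (N : nat) (t : R) :
  is_derive (fun s => Im (sum_n (fun n => RtoC (s ^ S n) * c n)%C N)) t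
            (Im (sum_n (fun n => RtoC (INR (S n) * t ^ n) * c n)%C N)).
Proof.
  apply (is_derive_ext (fun s => sum_n (fun n => s ^ S n * Im (c n)) N)).
  { intros s. rewrite Im_sum_n. apply sum_n_ext. intros n. unfold Im; simpl. ring. }
  rewrite Im_sum_n. erewrite sum_n_ext; [apply is_derive_sum_pow|].
  intros n. unfold Im; simpl. ring.
Qed.

Lemma Rabs_sub_le_of_is_derive (h h' : R -> R) (B : R) :
  (forall t, 0 <= t <= 1 -> is_derive h t (h' t)) ->
  (forall t, 0 <= t <= 1 -> Rabs (h' t) <= B) ->
  Rabs (h 1 - h 0) <= B.
Proof.
  intros Hd Hb.
  assert (Hmin : Rmin 0 1 = 0) by (apply Rmin_left; lra).
  assert (Hmax : Rmax 0 1 = 1) by (apply Rmax_right; lra).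
  destruct (MVT_gen h 0 1 h') as [c [Hc ->]]; rewrite ?Hmin, ?Hmax in *.
  - intros x Hx. apply Hd. lra.
  - intros x Hx. apply continuity_pt_filterlim, (ex_derive_continuous (V := R_NormedModule)).
    eexists. apply Hd. exact Hx.
  - rewrite Rminus_0_r, Rmult_1_r. apply Hb, Hc.
Qed.

Lemma Cmod_sub_le_of_is_derive (f f' : R -> C) (B : R) :
  (forall t, 0 <= t <= 1 -> is_derive (fun s => Re (f s)) t (Re (f' t))) ->
  (forall t, 0 <= t <= 1 -> is_derive (fun s => Im (f s)) t (Im (f' t))) ->
  (forall t, 0 <= t <= 1 -> Cmod (f' t) <= B) ->
  Cmod (f 1 - f 0)%C <= 2 * B.
Proof.
  intros Hre Him Hb.
  assert (HR : Rabs (Re (f 1) - Re (f 0)) <= B).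
  { apply (Rabs_sub_le_of_is_derive _ _ B Hre). intros t Ht.
    eapply Rle_trans; [apply re_le_Cmod | apply Hb, Ht]. }
  assert (HI : Rabs (Im (f 1) - Im (f 0)) <= B).
  { apply (Rabs_sub_le_of_is_derive _ _ B Him). intros t Ht.
    eapply Rle_trans; [apply Rabs_Im_le_Cmod | apply Hb, Ht]. }
  eapply Rle_trans; [apply Cmod_le_Rabs_Re_Im|].
  unfold Re, Im in *; simpl. unfold Rminus in HR, HI. lra.
Qed.

Lemma is_series_of_geometric_rate (u : nat -> C) (L : C) (K rho : R) :
  0 <= rho < 1 -> (forall N, Cmod (sum_n u N - L)%C <= K * rho ^ N) -> is_series u L.
Proof.
  intros Hrho Hb.
  assert (Hlim : is_lim_seq (fun N => K * rho ^ N) 0).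
  { replace (Finite 0) with (Rbar_mult K 0) by (simpl; f_equal; ring).
    apply is_lim_seq_scal_l, is_lim_seq_geom. rewrite Rabs_pos_eq; lra. }
  apply is_lim_seq_spec in Hlim.
  apply filterlim_locally. intros eps.
  destruct (Hlim eps) as [N0 HN0]. exists N0. intros N HN.
  apply norm_compat1. change (Cmod (sum_n u N - L)%C < eps).
  specialize (HN0 N HN). rewrite Rminus_0_r in HN0.
  eapply Rle_lt_trans; [apply Hb|]. eapply Rle_lt_trans; [apply Rle_abs | exact HN0].
Qed.

Section DivisionByOnePlus.

Variables a b : nat -> R.
Hypothesis a_0 : a 0%nat = 0.
Hypothesis a_S : forall n, a (S n) = b n - a n.

Lemma one_add_mul_sum_n (w : C) (M : nat) :
  ((1 + w) * sum_n (fun m => RtoC (a (S m)) * w ^ S m) M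
   = sum_n (fun n => RtoC (b n) * w ^ S n) M + RtoC (a (S M)) * w ^ S (S M))%C.
Proof.
  induction M as [|M IH].
  - rewrite !sum_O, a_S, a_0, Rminus_0_r. simpl. ring.
  - rewrite !sum_Sn. change plus with Cplus.
    replace (b (S M)) with (a (S (S M)) + a (S M)) by (rewrite a_S; ring).
    rewrite RtoC_plus.
    rewrite Cmult_plus_distr_l, IH, !Cpow_S. ring.
Qed.

Lemma Rabs_le_of_geometric (r : R) : 0 <= r < 1 ->
  (forall n, Rabs (b n) <= r ^ S n) -> forall n, Rabs (a n) <= r / (1 - r).
Proof.
  intros Hr Hb n.
  enough (Rabs (a n) <= (r - r ^ S n) / (1 - r)).
  { eapply Rle_trans; [eassumption|]. apply Rmult_le_compat_r.
    - left; apply Rinv_0_lt_compat; lra.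
    - pose proof (pow_le r (S n) (proj1 Hr)). lra. }
  induction n as [|n IH].
  - rewrite a_0, Rabs_R0. simpl. rewrite Rmult_1_r, Rminus_eq_0, Rdiv_0_l. lra.
  - rewrite a_S. eapply Rle_trans; [apply Rabs_triang|]. rewrite Rabs_Ropp.
    apply Rle_trans with (r ^ S n + (r - r ^ S n) / (1 - r)); [specialize (Hb n); lra|].
    right. simpl. field. lra.
Qed.

Lemma Cmod_sum_n_div_sub_le (w L : C) (K A rho : R) :
  (1 + w)%C <> 0%C -> Cmod w <= rho <= 1 -> (forall n, Rabs (a n) <= A) ->
  (forall N, Cmod (sum_n (fun n => RtoC (b n) * w ^ S n)%C N - L)%C <= K * rho ^ N) ->
  forall N, Cmod (sum_n (fun m => RtoC (a (S m)) * w ^ S m)%C N - L / (1 + w))%C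
            <= (K + A) / Cmod (1 + w) * rho ^ N.
Proof.
  intros Hw Hrho HA HK N.
  assert (Hz : 0 < Cmod (1 + w)) by (apply Cmod_gt_0; exact Hw).
  assert (HP := one_add_mul_sum_n w N).
  set (P := sum_n (fun m => RtoC (a (S m)) * w ^ S m)%C N) in *.
  set (G := sum_n (fun n => RtoC (b n) * w ^ S n)%C N) in *.
  replace (P - L / (1 + w))%C with (((1 + w) * P - L) / (1 + w))%C by (field; exact Hw).
  rewrite HP.
  replace (G + RtoC (a (S N)) * w ^ S (S N) - L)%C
    with (G - L + RtoC (a (S N)) * w ^ S (S N))%C by ring.
  rewrite Cmod_div by exact Hw.
  replace ((K + A) / Cmod (1 + w) * rho ^ N) with ((K + A) * rho ^ N / Cmod (1 + w))
    by (field; lra).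
  apply Rmult_le_compat_r; [left; apply Rinv_0_lt_compat, Hz|].
  eapply Rle_trans; [apply Cmod_triangle|].
  rewrite Rmult_plus_distr_r. apply Rplus_le_compat; [apply HK|].
  rewrite Cmod_mult, Cmod_R, Cmod_pow.
  assert (Hw0 := Cmod_ge_0 w).
  apply Rmult_le_compat; [apply Rabs_pos | apply pow_le, Hw0 | apply HA | apply pow_SS_le; lra].
Qed.

End DivisionByOnePlus.

Definition q : C := (-1/2, 1/2).

Lemma Cmod_q_bounds : 0 < Cmod q < 1.
Proof.
  assert (H2 : Cmod q ^ 2 = / 2) by (rewrite Cmod2_alt; unfold q, Re, Im; simpl; field).
  assert (H0 := Cmod_ge_0 q). simpl in H2. split; nra.
Qed.

Lemma Cconj_q : Cconj q = (q - Ci)%C.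
Proof. unfold q, Cconj, Ci. apply injective_projections; simpl; field. Qed.

Lemma one_add_sq_factor (u : C) :
  (1 + (1 + u) ^ 2 = 2 * (1 - q * u) * (1 - Cconj q * u))%C.
Proof. destruct u as [u1 u2]. unfold q, Cconj. apply injective_projections; simpl; field. Qed.

Lemma Cpow_q (k : nat) :
  (q ^ k)%C = (cos (3 * INR k * PI / 4) / sqrt 2 ^ k, sin (3 * INR k * PI / 4) / sqrt 2 ^ k).
Proof.
  assert (Hs0 := Rlt_sqrt2_0).
  induction k as [|k IH].
  - rewrite Rmult_0_r, Rmult_0_l, Rdiv_0_l, cos_0, sin_0.
    apply injective_projections; simpl; field.
  - rewrite Cpow_S, IH, S_INR.
    replace (3 * (INR k + 1) * PI / 4) with (3 * INR k * PI / 4 + 3 * (PI / 4)) by field.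
    rewrite cos_plus, sin_plus, cos_3PI4, sin_3PI4.
    assert (Hk : sqrt 2 ^ k <> 0) by (apply pow_nonzero; lra).
    unfold q; apply injective_projections; simpl; field_simplify; try lra;
      rewrite pow2_sqrt by lra; f_equal; ring.
Qed.

Lemma Rpower_2_half (k : nat) : Rpower 2 (INR k / 2) = sqrt 2 ^ k.
Proof.
  replace (INR k / 2) with (/ 2 * INR k) by field.
  rewrite <- Rpower_mult, Rpower_sqrt by lra.
  apply Rpower_pow, Rlt_sqrt2_0.
Qed.

Definition arctan_coef (n : nat) : R := Im (q ^ S n) / INR (S n).

Lemma Rabs_arctan_coef (n : nat) : Rabs (arctan_coef n) <= Cmod q ^ S n.
Proof.
  unfold arctan_coef. rewrite <- Cmod_pow.
  assert (Hn : 1 <= INR (S n)) by (rewrite S_INR; pose proof (pos_INR n); lra).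
  assert (Him := Rabs_Im_le_Cmod (q ^ S n)).
  unfold Rdiv. rewrite Rabs_mult, Rabs_inv, (Rabs_pos_eq (INR (S n))) by lra.
  assert (0 < / INR (S n) <= 1).
  { split; [apply Rinv_0_lt_compat; lra|]. rewrite <- Rinv_1. apply Rinv_le_contravar; lra. }
  pose proof (Rabs_pos (Im (q ^ S n))). nra.
Qed.

Lemma T_0 : T 0 = 0.
Proof. unfold T. rewrite sum_n_m_zero by lia. reflexivity. Qed.

Lemma T_S (n : nat) : T (S n) = T n + (-1) ^ S n * arctan_coef n.
Proof.
  unfold T at 1. rewrite sum_n_Sm by lia. change plus with Rplus. fold (T n). f_equal.
  unfold arctan_coef. rewrite Rpower_2_half, Cpow_q. cbn [Im snd].
  unfold Rdiv. rewrite Rinv_mult. ring.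
Qed.

Lemma signed_T_S (n : nat) : (-1) ^ S n * T (S n) = arctan_coef n - (-1) ^ n * T n.
Proof.
  rewrite T_S, Rmult_plus_distr_l, <- Rmult_assoc, <- pow_add.
  replace (S n + S n)%nat with (2 * S n)%nat by lia.
  rewrite pow_1_even. simpl. ring.
Qed.

Definition arctan_segment (w : C) (t : R) : C :=
  ((atan ((1 + t * Re w) / (1 + t * Im w)) + atan ((1 + t * Re w) / (1 - t * Im w))) / 2,
   (ln ((1 + t * Im w) ^ 2 + (1 + t * Re w) ^ 2)
    - ln ((1 - t * Im w) ^ 2 + (1 + t * Re w) ^ 2)) / 4).

Lemma Clog_of_Re_pos (x y : R) : 0 < x -> Clog (x, y) = (ln (x ^ 2 + y ^ 2) / 2, atan (y / x)).
Proof.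
  intros Hx. unfold Clog, Arg, Cmod. cbn [fst snd].
  destruct (Rlt_dec 0 x) as [_|]; [|lra].
  assert (Hxy : 0 < x ^ 2 + y ^ 2)
    by (apply Rplus_lt_le_0_compat; [apply pow_lt, Hx | apply pow2_ge_0]).
  rewrite <- (sqrt_sqrt (x ^ 2 + y ^ 2)) at 2 by lra.
  rewrite ln_mult by (apply sqrt_lt_R0, Hxy). f_equal. field.
Qed.

Lemma Carctan_segment (w : C) (t : R) : -1 < t * Im w < 1 ->
  Carctan (1 + t * w) = arctan_segment w t.
Proof.
  intros Ht. destruct w as [w1 w2]. unfold Carctan, arctan_segment, Re, Im in *. cbn [fst snd] in *.
  replace (1 - Ci * (1 + t * (w1, w2)))%C with ((1 + t * w2, - (1 + t * w1)) : C)
    by (apply injective_projections; simpl; ring).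
  replace (1 + Ci * (1 + t * (w1, w2)))%C with ((1 - t * w2, 1 + t * w1) : C)
    by (apply injective_projections; simpl; ring).
  rewrite !Clog_of_Re_pos by lra.
  replace (- (1 + t * w1) / (1 + t * w2)) with (- ((1 + t * w1) / (1 + t * w2))) by (field; lra).
  rewrite atan_opp.
  replace ((- (1 + t * w1)) ^ 2) with ((1 + t * w1) ^ 2) by ring.
  apply injective_projections; simpl; field.
Qed.

Lemma arctan_segment_0 (w : C) : arctan_segment w 0 = RtoC (PI / 4).
Proof.
  unfold arctan_segment. rewrite !Rmult_0_l, Rplus_0_r, Rminus_0_r, Rdiv_1_r, atan_1.
  apply injective_projections; simpl; field.
Qed.

Lemma segment_Im_bound (w : C) (t : R) : Cmod w < 1 -> 0 <= t <= 1 -> -1 < t * Im w < 1.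
Proof.
  intros Hw Ht.
  assert (HI : Rabs (Im w) < 1) by (eapply Rle_lt_trans; [apply Rabs_Im_le_Cmod | exact Hw]).
  apply Rabs_def2 in HI. split; nra.
Qed.

Ltac sum_sq_pos :=
  apply Rplus_lt_le_0_compat; [apply Rmult_lt_0_compat; lra | apply Rle_0_sqr].

Lemma Cmod2_one_add_sq (w : C) (t : R) :
  Re (1 + (1 + t * w) ^ 2)%C ^ 2 + Im (1 + (1 + t * w) ^ 2)%C ^ 2
  = ((1 + t * Im w) ^ 2 + (1 + t * Re w) ^ 2) * ((1 - t * Im w) ^ 2 + (1 + t * Re w) ^ 2).
Proof. destruct w as [w1 w2]. unfold Re, Im. simpl. ring. Qed.

Lemma is_derive_arctan_segment_Re (w : C) (t : R) : -1 < t * Im w < 1 ->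
  is_derive (fun s => Re (arctan_segment w s)) t (Re (w / (1 + (1 + t * w) ^ 2))).
Proof.
  intros Ht. unfold arctan_segment, Re at 1. cbn [fst]. auto_derive; [lra|].
  rewrite Re_Cdiv, Cmod2_one_add_sq. destruct w as [w1 w2]. unfold Re, Im in *. simpl in *.
  field. repeat split; apply Rgt_not_eq; first [lra | sum_sq_pos].
Qed.

Lemma is_derive_arctan_segment_Im (w : C) (t : R) : -1 < t * Im w < 1 ->
  is_derive (fun s => Im (arctan_segment w s)) t (Im (w / (1 + (1 + t * w) ^ 2))).
Proof.
  intros Ht. unfold arctan_segment, Im at 1. cbn [snd].
  auto_derive; [rewrite !Rmult_1_r; repeat split; sum_sq_pos|].
  rewrite Im_Cdiv, Cmod2_one_add_sq. destruct w as [w1 w2]. unfold Re, Im in *. simpl in *.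
  field. repeat split; apply Rgt_not_eq; sum_sq_pos.
Qed.

Definition arctan_poly (w : C) (N : nat) (t : R) : C :=
  sum_n (fun n => RtoC (t ^ S n) * (RtoC (arctan_coef n) * w ^ S n))%C N.

Definition arctan_err (w : C) (N : nat) (t : R) : C :=
  (w / (2 * Ci) * (q * (q * (t * w)) ^ S N / (1 - q * (t * w))
                   - Cconj q * (Cconj q * (t * w)) ^ S N / (1 - Cconj q * (t * w))))%C.

Lemma arctan_poly_0 (w : C) (N : nat) : arctan_poly w N 0 = 0%C.
Proof.
  unfold arctan_poly. induction N as [|N IH]; [rewrite sum_O | rewrite sum_Sn, IH];
    rewrite pow_i, Cmult_0_l by lia; [reflexivity | apply Cplus_0_l].
Qed.

Lemma arctan_poly_1 (w : C) (N : nat) :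
  arctan_poly w N 1 = sum_n (fun n => RtoC (arctan_coef n) * w ^ S n)%C N.
Proof. apply sum_n_ext. intros n. rewrite pow1. apply Cmult_1_l. Qed.

Lemma arctan_poly_deriv_term (w : C) (t : R) (n : nat) :
  (RtoC (INR (S n) * t ^ n) * (RtoC (arctan_coef n) * w ^ S n)
   = w / (2 * Ci) * (q ^ S n * (t * w) ^ n - Cconj q ^ S n * (t * w) ^ n))%C.
Proof.
  assert (Hn : INR (S n) <> 0) by (apply not_0_INR; lia).
  unfold arctan_coef. rewrite RtoC_mult, RtoC_div by exact Hn.
  rewrite im_alt, Cpow_conj, RtoC_pow, !Cpow_mult_l, !(Cpow_S w).
  field. repeat split; first [apply RtoC_neq_0, Hn | exact Ci_nz | exact C2_neq_0].
Qed.

Lemma arctan_poly_deriv_eq (w : C) (N : nat) (t : R) :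
  (1 - q * (t * w))%C <> 0%C -> (1 - Cconj q * (t * w))%C <> 0%C ->
  sum_n (fun n => RtoC (INR (S n) * t ^ n) * (RtoC (arctan_coef n) * w ^ S n))%C N
  = (w / (1 + (1 + t * w) ^ 2) - arctan_err w N t)%C :> C.
Proof.
  intros Hq Hqc.
  rewrite (sum_n_ext _ _ N (arctan_poly_deriv_term w t)).
  rewrite sum_n_Cmult_sub, !sum_n_geom_mul by assumption.
  unfold arctan_err. rewrite one_add_sq_factor. rewrite Cconj_q in *.
  field. repeat split; first [exact Hq | exact Hqc | exact Ci_nz].
Qed.

Lemma Cmod_arctan_err_le (w : C) (N : nat) (t : R) : Cmod w <= 1 -> 0 <= t <= 1 ->
  Cmod (arctan_err w N t) <= Cmod q ^ S (S N) / (1 - Cmod q).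
Proof.
  intros Hw Ht. assert (Hq := Cmod_q_bounds).
  assert (Hu := Cmod_RtoC_mul_le t w Ht Hw).
  assert (Hqc : Cmod (Cconj q) < 1) by (rewrite Cmod_conj; lra).
  pose proof (Cmod_geom_tail_le q (t * w) N (proj2 Hq) Hu) as B1.
  pose proof (Cmod_geom_tail_le (Cconj q) (t * w) N Hqc Hu) as B2.
  rewrite Cmod_conj in B2.
  assert (Hc : Cmod (w / (2 * Ci)) <= 1 / 2).
  { rewrite Cmod_div by (apply Cmult_neq_0; [exact C2_neq_0 | exact Ci_nz]).
    rewrite Cmod_mult, Cmod_R, Cmod_Ci, Rabs_pos_eq by lra. lra. }
  unfold arctan_err. rewrite Cmod_mult.
  eapply Rle_trans.
  { apply Rmult_le_compat; [apply Cmod_ge_0 | apply Cmod_ge_0 | exact Hc |].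
    unfold Cminus. eapply Rle_trans; [apply Cmod_triangle|]. rewrite Cmod_opp.
    apply Rplus_le_compat; [exact B1 | exact B2]. }
  lra.
Qed.

Lemma is_derive_arctan_remainder (w : C) (N : nat) (t : R) : Cmod w < 1 -> 0 <= t <= 1 ->
  is_derive (fun s => Re (arctan_segment w s - arctan_poly w N s)%C) t (Re (arctan_err w N t))
  /\ is_derive (fun s => Im (arctan_segment w s - arctan_poly w N s)%C) t (Im (arctan_err w N t)).
Proof.
  intros Hw Ht.
  assert (Hs := segment_Im_bound w t Hw Ht).
  assert (Hu := Cmod_RtoC_mul_le t w Ht (Rlt_le _ _ Hw)).
  assert (Hq : Cmod q < 1) by apply Cmod_q_bounds.
  assert (Hqc : Cmod (Cconj q) < 1) by (rewrite Cmod_conj; exact Hq).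
  replace (arctan_err w N t) with
    (w / (1 + (1 + t * w) ^ 2)
     - sum_n (fun n => RtoC (INR (S n) * t ^ n) * (RtoC (arctan_coef n) * w ^ S n)) N)%C
    by (rewrite arctan_poly_deriv_eq by (apply one_sub_mul_neq_0; assumption); ring).
  split; apply (is_derive_minus (V := R_NormedModule)).
  - apply is_derive_arctan_segment_Re, Hs.
  - apply is_derive_Re_sum_pow.
  - apply is_derive_arctan_segment_Im, Hs.
  - apply is_derive_Im_sum_pow.
Qed.

Lemma Cmod_arctan_partial_sum_sub_le (w : C) (N : nat) : Cmod w < 1 ->
  Cmod (sum_n (fun n => RtoC (arctan_coef n) * w ^ S n)%C N
        - (Carctan (1 + w) - RtoC (PI / 4)))%C
  <= 2 * (Cmod q ^ S (S N) / (1 - Cmod q)).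
Proof.
  intros Hw.
  set (f t := (arctan_segment w t - arctan_poly w N t)%C).
  assert (Hf : (f 1 - f 0)%C = (- (sum_n (fun n => RtoC (arctan_coef n) * w ^ S n)%C N
                                   - (Carctan (1 + w) - RtoC (PI / 4))))%C).
  { unfold f. rewrite arctan_poly_0, arctan_poly_1, arctan_segment_0, <- Carctan_segment.
    - rewrite Cmult_1_l. ring.
    - apply segment_Im_bound; [exact Hw | lra]. }
  rewrite <- Cmod_opp, <- Hf.
  apply (Cmod_sub_le_of_is_derive f (arctan_err w N)).
  - intros t Ht. apply (is_derive_arctan_remainder w N t Hw Ht).
  - intros t Ht. apply (is_derive_arctan_remainder w N t Hw Ht).
  - intros t Ht. apply Cmod_arctan_err_le; [lra | exact Ht].
Qed.

Theorem corollary3p1 (z : C) :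
  Cmod (z - 1)%C < 1 ->
  is_series
    (fun m : nat => (RtoC ((-1) ^ (S m) * T (S m)) * (z - 1) ^ (S m))%C)
    ((Carctan z - RtoC (PI / 4)) / z)%C.
Proof.
  intros Hw. set (w := (z - 1)%C) in *.
  replace z with (1 + w)%C by (unfold w; ring).
  assert (Hz : (1 + w)%C <> 0%C).
  { replace (1 + w)%C with (1 - w * Copp 1)%C by ring.
    apply one_sub_mul_neq_0; [exact Hw | rewrite Cmod_opp, Cmod_1; lra]. }
  set (r := Cmod q). assert (Hr : 0 < r < 1) by apply Cmod_q_bounds.
  set (rho := Rmax r (Cmod w)).
  assert (Hrho : r <= rho /\ Cmod w <= rho /\ rho < 1)
    by (unfold rho; repeat split; [apply Rmax_l | apply Rmax_r | apply Rmax_lub_lt; lra]).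
  apply (is_series_of_geometric_rate _ _ ((2 / (1 - r) + r / (1 - r)) / Cmod (1 + w)) rho);
    [lra|].
  assert (HT0 : (-1) ^ 0 * T 0 = 0) by (rewrite T_0; ring).
  apply (Cmod_sum_n_div_sub_le _ _ HT0 signed_T_S); [exact Hz | lra | |].
  - apply (Rabs_le_of_geometric _ _ HT0 signed_T_S r); [lra|].
    exact Rabs_arctan_coef.
  - intros N. eapply Rle_trans; [apply Cmod_arctan_partial_sum_sub_le, Hw|].
    fold r. replace (2 * (r ^ S (S N) / (1 - r))) with (2 / (1 - r) * r ^ S (S N))
      by (field; lra).
    apply Rmult_le_compat_l; [apply Rmult_le_pos; [lra | left; apply Rinv_0_lt_compat; lra]|].
    apply pow_SS_le; lra.
Qed.
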